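(* Let $R=R_1\times\cdots\times R_n$ be a direct product of finite commutative local rings with identity, with $n\geq 4$, and let $I=I_1\times\cdots\times I_n$ where $I_i$ is a proper ideal of $R_i$ for every $i=1,\dots,n$. Then $\Gamma''_I(R)$ is not planar.
   Context: The product has componentwise operations. For a commutative ring $R$ and an ideal $I$ of $R$, $\Gamma''_I(R)$ is the simple undirected graph whose vertex set is $\{x\in R\setminus I : xR+I\neq R\}$, with distinct vertices $x,y$ adjacent if and only if $x\notin yR+I$ and $y\notin xR+I$. A graph is planar if it can be drawn in the plane with edges meeting only at their endpoints. *)

From HB Require Import structures.
From mathcomp Require Import all_boot all_order all_algebra ring_quotient.
From mathcomp Require Import all_classical all_reals all_analysis.
From mathcomp Require Import Rstruct Rstruct_topology.
Set Implicit Arguments. Unset Strict Implicit. Unset Printing Implicit Defensive.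
Import Order.TTheory GRing.Theory Num.Theory.
Local Open Scope ring_scope.

Section ProdRing.
Variables (n : nat) (R : 'I_n -> comPzRingType).
Definition prodR := {dffun forall i : 'I_n, R i}.
HB.instance Definition _ := Choice.on prodR.
Definition prod0 : prodR := [ffun i => 0].
Definition prodN (x : prodR) : prodR := [ffun i => - x i].
Definition prodD (x y : prodR) : prodR := [ffun i => x i + y i].
Definition prod1 : prodR := [ffun i => 1].
Definition prodM (x y : prodR) : prodR := [ffun i => x i * y i].
Lemma prodDA : associative prodD.
Proof. by move=> x y z; apply/ffunP=> i; rewrite !ffunE addrA. Qed.
Lemma prodDC : commutative prodD.
Proof. by move=> x y; apply/ffunP=> i; rewrite !ffunE addrC. Qed.
Lemma prod0D : left_id prod0 prodD.
Proof. by move=> x; apply/ffunP=> i; rewrite !ffunE add0r. Qed.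
Lemma prodND : left_inverse prod0 prodN prodD.
Proof. by move=> x; apply/ffunP=> i; rewrite !ffunE addNr. Qed.
HB.instance Definition _ := GRing.isZmodule.Build prodR prodDA prodDC prod0D prodND.
Lemma prodMA : associative prodM.
Proof. by move=> x y z; apply/ffunP=> i; rewrite !ffunE mulrA. Qed.
Lemma prodMC : commutative prodM.
Proof. by move=> x y; apply/ffunP=> i; rewrite !ffunE mulrC. Qed.
Lemma prod1M : left_id prod1 prodM.
Proof. by move=> x; apply/ffunP=> i; rewrite !ffunE mul1r. Qed.
Lemma prodMDl : left_distributive prodM prodD.
Proof. by move=> x y z; apply/ffunP=> i; rewrite !ffunE mulrDl. Qed.
HB.instance Definition _ :=
  GRing.Zmodule_isComPzRing.Build prodR prodMA prodMC prod1M prodMDl.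
End ProdRing.

Lemma prodR_addE n (R : 'I_n -> comPzRingType) (x y : prodR R) i :
  (x + y) i = x i + y i.
Proof. by rewrite ffunE. Qed.
Lemma prodR_mulE n (R : 'I_n -> comPzRingType) (x y : prodR R) i :
  (x * y) i = x i * y i.
Proof. by rewrite ffunE. Qed.

Definition prod_ideal n (R : 'I_n -> comPzRingType) (I : forall i, {pred R i})
  : {pred prodR R} := fun x => [forall i, x i \in I i].

Definition maximal_ideal (A : nzRingType) (M : {pred A}) : Prop :=
  idealr_closed M /\
  forall J : {pred A}, idealr_closed J -> {subset M <= J} -> J =i M.

Definition local_ring (A : comNzRingType) : Prop :=
  exists M : {pred A}, maximal_ideal M /\
    forall M' : {pred A}, maximal_ideal M' -> M' =i M.

Definition in_xR_I (A : comPzRingType) (I : {pred A}) (x y : A) : Prop :=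
  exists r a, a \in I /\ y = x * r + a.

Definition xR_I_proper (A : comPzRingType) (I : {pred A}) (x : A) : Prop :=
  ~ (forall z : A, in_xR_I I x z).

Definition G2_vertex (A : comPzRingType) (I : {pred A}) (x : A) : Prop :=
  x \notin I /\ xR_I_proper I x.

Definition G2_adj (A : comPzRingType) (I : {pred A}) (x y : A) : Prop :=
  x <> y /\ ~ in_xR_I I y x /\ ~ in_xR_I I x y.

Local Open Scope classical_set_scope.
Definition plane := (Rdefinitions.R * Rdefinitions.R)%type.

Definition planar (T : Type) (V : T -> Prop) (E : T -> T -> Prop) : Prop :=
  exists (p : T -> plane) (g : T -> T -> Rdefinitions.R -> plane),
    (forall u v, V u -> V v -> p u = p v -> u = v) /\
    (forall u v, V u -> V v -> E u v ->
       [/\ {within [set t : Rdefinitions.R | 0 <= t <= 1],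
              continuous (g u v)},
           g u v 0 = p u, g u v 1 = p v,
           (forall s t, 0 <= s <= 1 -> 0 <= t <= 1 -> g u v s = g u v t -> s = t)
         & (forall t w, 0 < t < 1 -> V w -> g u v t <> p w)]) /\
    (forall u v u' v', V u -> V v -> E u v -> V u' -> V v' -> E u' v' ->
       ~ ((u' = u /\ v' = v) \/ (u' = v /\ v' = u)) ->
       forall s t, 0 <= s <= 1 -> 0 <= t <= 1 -> g u v s = g u' v' t ->
       exists w, V w /\ g u v s = p w).

From HB Require Import structures.
From mathcomp Require Import all_boot all_order all_algebra ring_quotient.
From mathcomp Require Import all_classical all_reals all_analysis.
From mathcomp Require Import Rstruct Rstruct_topology.
From mathcomp Require Import ring lra.

(* The five 0/1 vectors whose supports are five of the two-element subsets of
   the first four coordinates are pairwise incomparable for divisibility modulo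
   I, so they span a K5 in Gamma''_I(R).  K5 is not planar: sample the edges of
   a drawing finely enough that, by compactness, every small grid cell of
   (s, t) |-> e(s) - f(t), for disjoint edges e, f, lies in an open half-plane.
   Counting mod 2 the crossings of the resulting polygons with horizontal rays,
   each such pair gives an identity between "edge crosses the ray from a vertex"
   terms and "vertex above vertex" terms.  Summed over the 15 pairs of disjoint
   edges, the first kind cancels and the second kind adds up to 1. *)

Set Implicit Arguments.
Unset Strict Implicit.
Unset Printing Implicit Defensive.

Import Order.TTheory GRing.Theory Num.Theory.
Import numFieldNormedType.Exports.
Local Open Scope ring_scope.

Lemma big_addb_even (T : eqType) (s : seq T) (F : T -> bool) :
  all (fun t => ~~ odd (count_mem t s)) s -> \big[addb/false]_(t <- s) F t = false.
Proof.
move=> s_even; rewrite -big_undup_iterop_count; apply: big1_seq => t /andP[_].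
rewrite mem_undup Monoid.iteropE => /(allP s_even) /negbTE t_even.
have iterE k : iter k (addb (F t)) false = F t && odd k.
  by elim: k => [|k /= ->]; [rewrite andbF | case: (F t)].
by rewrite iterE t_even andbF.
Qed.

Lemma big_addb_telescope (n : nat) (x : nat -> bool) :
  \big[addb/false]_(i < n) (x i (+) x i.+1) = x 0%N (+) x n.
Proof.
elim: n => [|n IHn]; first by rewrite big_ord0 addbb.
by rewrite big_ord_recr /= IHn -addbA addKb.
Qed.

Notation "\xor_ ( i < n ) F" := (\big[addb/false]_(i < n) F%B)
  (at level 41, F at level 41, i, n at level 50).

Definition K5_disjoint_edge_pairs : seq (nat * nat * nat * nat) :=
  [:: (0, 1, 2, 3); (0, 1, 2, 4); (0, 1, 3, 4); (0, 2, 1, 3); (0, 2, 1, 4);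
      (0, 2, 3, 4); (0, 3, 1, 2); (0, 3, 1, 4); (0, 3, 2, 4); (0, 4, 1, 2);
      (0, 4, 1, 3); (0, 4, 2, 3); (1, 2, 3, 4); (1, 3, 2, 4); (1, 4, 2, 3)]%N.

Definition disjoint_edges (x : nat * nat * nat * nat) : bool :=
  let: (a, b, c, d) := x in
  [&& (a < b < 5)%N, (c < d < 5)%N & [&& a != c, a != d, b != c & b != d]].

Lemma K5_disjoint_edge_pairsP : all disjoint_edges K5_disjoint_edge_pairs.
Proof. by []. Qed.

Lemma K5_pair_edges a b c d : (a, b, c, d) \in K5_disjoint_edge_pairs ->
  (a < b < 5)%N /\ (c < d < 5)%N.
Proof. by move=> /(allP K5_disjoint_edge_pairsP) /and3P[]. Qed.

Definition edge_vertex_terms (x : nat * nat * nat * nat) : seq (nat * nat * nat) :=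
  let: (a, b, c, d) := x in [:: (a, b, c); (a, b, d); (c, d, a); (c, d, b)].

Definition vertex_pair_terms (x : nat * nat * nat * nat) : seq (nat * nat) :=
  let: (a, b, c, d) := x in [:: (a, c); (a, d); (b, c); (b, d)].

Lemma K5_edge_vertex_sum (A : nat -> nat -> nat -> bool) :
  \big[addb/false]_(x <- K5_disjoint_edge_pairs)
     \big[addb/false]_(t <- edge_vertex_terms x) A t.1.1 t.1.2 t.2 = false.
Proof.
rewrite -[LHS](big_map _ xpredT (fun s => \big[addb/false]_(t <- s) _)) -big_flatten.
by apply: big_addb_even; vm_compute.
Qed.

Lemma K5_vertex_pair_sum (H : nat -> nat -> bool) :
  (forall x y, (x < 5)%N -> (y < 5)%N -> x != y -> H y x = ~~ H x y) ->
  \big[addb/false]_(x <- K5_disjoint_edge_pairs)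
     \big[addb/false]_(t <- vertex_pair_terms x) H t.1 t.2 = true.
Proof.
move=> H_anti.
(* Each unordered pair of vertices occurs six times, and an odd number of times
   in decreasing order: only this count survives. *)
rewrite -[LHS](big_map _ xpredT (fun s => \big[addb/false]_(t <- s) _)) -big_flatten.
set s := flatten _; pose sort2 (t : nat * nat) := (minn t.1 t.2, maxn t.1 t.2).
have s_bounded : all (fun t => [&& (t.1 < 5)%N, (t.2 < 5)%N & t.1 != t.2]) s.
  by vm_compute.
have sortE t : t \in s -> H t.1 t.2 = (t.2 < t.1)%N (+) H (sort2 t).1 (sort2 t).2.
  move=> /(allP s_bounded); case: t => x y /and3P[/= x5 y5 xy].
  by case: ltngtP xy => // lt_yx _; rewrite H_anti ?negbK // ltn_eqF.
rewrite (eq_big_seq _ sortE) big_split /=.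
rewrite -(big_map sort2 xpredT (fun t => H t.1 t.2)) [X in _ (+) X]big_addb_even ?addbF.
  by rewrite unlock.
by vm_compute.
Qed.

Lemma pair_neq0 (U V : nmodType) (a : U) (b : V) :
  ((a, b) != 0) = (a != 0) || (b != 0).
Proof. by rewrite -negb_and; congr (~~ _); apply/eqP/andP => [[-> ->]|[/eqP-> /eqP->]]. Qed.

Lemma common_pos_bound (R : realDomainType) (T : eqType) (s : seq T) (Q : T -> R -> Prop) :
  (forall x m m', 0 < m' <= m -> Q x m -> Q x m') ->
  (forall x, x \in s -> exists2 m, 0 < m & Q x m) ->
  exists2 m, 0 < m & forall x, x \in s -> Q x m.
Proof.
move=> Q_anti; elim: s => [|y s IHs] Q_pos; first by exists 1.
have [my my0 Qy] := Q_pos y (mem_head _ _).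
have [m m0 Qm] : exists2 m, 0 < m & forall x, x \in s -> Q x m.
  by apply: IHs => x xs; apply: Q_pos; rewrite inE xs orbT.
have min_pos : 0 < Num.min my m by rewrite lt_min my0 m0.
exists (Num.min my m) => // x /predU1P[->|xs].
  by apply: Q_anti Qy; rewrite min_pos ge_min lexx.
by apply: Q_anti (Qm x xs); rewrite min_pos ge_min lexx orbT.
Qed.

Section RayCrossing.
Variable R : realFieldType.
Implicit Types u z w : R * R.

Definition dotp u z := u.1 * z.1 + u.2 * z.2.

Definition det z w := z.1 * w.2 - z.2 * w.1.

Definition upper z := (0 < z.2) || ((z.2 == 0) && (0 < z.1)).

(* The segment [z, w] passes from one side of the x-axis to the other through
   the positive half-axis, which it meets at abscissa [det z w / (w.2 - z.2)]. *)
Definition ray_cross z w := (upper z != upper w) && (0 < det z w * (w.2 - z.2)).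

Lemma dotpC z w : dotp z w = dotp w z.
Proof. by rewrite /dotp mulrC [z.2 * _]mulrC. Qed.

Lemma ray_crossC z w : ray_cross z w = ray_cross w z.
Proof.
rewrite /ray_cross eq_sym; congr (_ && (0 < _)).
by rewrite /det; ring.
Qed.

Lemma upperP z : reflect (0 < z.2 \/ z.2 = 0 /\ 0 < z.1) (upper z).
Proof.
apply: (iffP orP) => [[z2|/andP[/eqP z2 z1]]|[z2|[z2 z1]]]; [by left|by right|by left|].
by right; rewrite z2 eqxx.
Qed.

Lemma negupperP z : reflect (z.2 < 0 \/ z.2 = 0 /\ z.1 <= 0) (~~ upper z).
Proof.
rewrite /upper negb_or negb_and -!leNgt.
apply: (iffP andP) => [[z2 /orP[z2n0|z1]]|[z2|[z2 z1]]].
- by left; rewrite lt_neqAle z2n0 z2.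
- have [z2lt|z2ge] := ltP z.2 0; first by left.
  by right; split=> //; apply/eqP; rewrite eq_le z2 z2ge.
- by split; [exact: ltW | rewrite lt_eqF].
- by rewrite z2 z1 orbT lexx.
Qed.

Lemma upperN z : z != 0 -> upper (- z) = ~~ upper z.
Proof.
move=> z0; case: (boolP (upper z)) => [/upperP z_up|/negupperP z_low].
  apply/negbTE/negupperP => /=.
  by case: z_up => [z2|[z2 z1]]; [left; lra | right; rewrite z2 oppr0; split=> //; lra].
apply/upperP => /=; case: z_low => [z2|[z2 z1]]; first by left; lra.
right; rewrite z2 oppr0 oppr_gt0 lt_neqAle z1 andbT; split=> //.
by move: z0; case: z z2 {z1} => a b /= ->; rewrite pair_neq0 eqxx orbF.
Qed.

Lemma dotp_gt0_neq0 z w : 0 < dotp z w -> z != 0.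
Proof. by apply: contraTneq => ->; rewrite /dotp /= !mul0r addr0 ltxx. Qed.

Lemma dotpp_gt0 z : z != 0 -> 0 < dotp z z.
Proof.
case: z => a b; rewrite pair_neq0 /dotp /= -!expr2 => /orP ab.
have a2 := sqr_ge0 a; have b2 := sqr_ge0 b.
case: ab => [a0|b0].
  have a2pos : 0 < a ^+ 2 by rewrite exprn_even_gt0 ?a0 ?orbT.
  lra.
have b2pos : 0 < b ^+ 2 by rewrite exprn_even_gt0 ?b0 ?orbT.
lra.
Qed.

(* The key identity is [u.1 * det z w = dotp u z * w.2 - dotp u w * z.2]. *)
Lemma lower_upper_det u z w : ~~ upper z -> upper w ->
  0 < dotp u z -> 0 < dotp u w -> 0 < u.1 * det z w /\ 0 < w.2 - z.2.
Proof.
move=> /negupperP z_low /upperP w_up uz uw.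
have sides : 0 < w.2 - z.2.
  case: z_low w_up => [z2|[z2 z1]] [w2|[w2 w1]]; try lra.
  move: uz uw; rewrite /dotp z2 w2 !mulr0 !addr0 => uz uw; nra.
split=> //; have -> : u.1 * det z w = dotp u z * w.2 + dotp u w * (- z.2).
  by rewrite /det /dotp; ring.
have z2 : 0 <= - z.2 by case: z_low => [|[->]]; lra.
have w2 : 0 <= w.2 by case: w_up => [|[->]]; lra.
by case: (ltrP 0 w.2) => w2pos; nra.
Qed.

Lemma ray_cross_half_plane u z w : 0 < dotp u z -> 0 < dotp u w ->
  ray_cross z w = (0 <= u.1) && (upper z != upper w).
Proof.
wlog z_low : z w / ~~ upper z.
  move=> wlog_low uz uw; have [z_up|z_low] := boolP (upper z); last first.
    by rewrite wlog_low // (negPf z_low).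
  have [w_up|w_low] := boolP (upper w); first by rewrite /ray_cross z_up w_up andbF.
  by rewrite ray_crossC wlog_low // z_up (negPf w_low).
move=> uz uw; have [w_up|w_low] := boolP (upper w); last first.
  by rewrite /ray_cross (negPf z_low) (negPf w_low) !andbF.
have [udet sides] := lower_upper_det z_low w_up uz uw.
rewrite /ray_cross (negPf z_low) ?w_up /= !andbT pmulr_lgt0 //.
by apply/idP/idP => h; nra.
Qed.

Lemma ray_crossN z w : 0 < dotp z w ->
  ray_cross z w (+) ray_cross (- z) (- w) = (upper z != upper w).
Proof.
move=> zw; have z0 := dotp_gt0_neq0 zw.
have w0 : w != 0 by apply: (@dotp_gt0_neq0 _ z); rewrite dotpC.
have zz := dotpp_gt0 z0; have ww := dotpp_gt0 w0.
have detN : det (- z) (- w) * ((- w).2 - (- z).2) = - (det z w * (w.2 - z.2)).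
  by rewrite /det /=; ring.
have signX (c X : R) : 0 < c * X -> (0 < X) (+) (X < 0).
  move=> cX; have [X0|X0|X0] := ltrgtP X 0 => //.
  by move: cX; rewrite X0 mulr0 ltxx.
rewrite /ray_cross detN oppr_gt0 (upperN z0) (upperN w0).
case: (boolP (upper z)) => z_up; case: (boolP (upper w)) => w_up //=.
  have wz : 0 < dotp w z by rewrite dotpC.
  have [wdet sides] := lower_upper_det w_up z_up ww wz.
  apply: (signX w.1); rewrite [X in 0 < _ * X](_ : _ = det w z * (z.2 - w.2)).
    by rewrite mulrA mulr_gt0.
  by rewrite /det; ring.
have [zdet sides] := lower_upper_det z_up w_up zz zw.
by apply: (signX z.1); rewrite mulrA mulr_gt0.
Qed.

Definition norm1 z := `|z.1| + `|z.2|.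

Lemma norm10 : norm1 0 = 0.
Proof. by rewrite /norm1 /= normr0 addr0. Qed.

Lemma norm1_gt0 z : z != 0 -> 0 < norm1 z.
Proof.
case: z => a b; rewrite pair_neq0 /norm1 /= => /orP[a0|b0].
  by apply: ltr_pwDl; rewrite ?normr_gt0.
by apply: ltr_pwDr; rewrite ?normr_gt0.
Qed.

Lemma norm1B z w : norm1 (z - w) <= norm1 z + norm1 w.
Proof.
by rewrite /norm1 /= addrACA lerD // ler_normB.
Qed.

Lemma dotp_gt0_near (m : R) z w : 0 < m -> m <= norm1 z -> norm1 (w - z) < m / 2 ->
  0 < dotp z w.
Proof.
rewrite /norm1 /dotp /= => m0 zm wz.
have lb (x y : R) : - (`|x| * `|y|) <= x * y.
  by have := ler_norm (- (x * y)); rewrite normrN normrM; lra.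
have := lb z.1 (w.1 - z.1); have := lb z.2 (w.2 - z.2).
have -> : z.1 * w.1 + z.2 * w.2
    = `|z.1| ^+ 2 + `|z.2| ^+ 2 + (z.1 * (w.1 - z.1) + z.2 * (w.2 - z.2)).
  by rewrite !real_normK ?num_real //; ring.
move: zm wz; set a := `|z.1|; set b := `|z.2|.
set d1 := `|w.1 - z.1|; set d2 := `|w.2 - z.2| => zm wz h2 h1.
have [a0 b0 d10 d20] : [/\ 0 <= a, 0 <= b, 0 <= d1 & 0 <= d2] by split; exact: normr_ge0.
have e1 : a * d1 + b * d2 <= (a + b) * (d1 + d2) by nra.
have e2 : (a + b) * (d1 + d2) < (a + b) * (m / 2) by rewrite ltr_pM2l //; lra.
have e3 : (a + b) * (m / 2) <= (a + b) ^+ 2 / 2 by rewrite expr2 mulrA ler_pM2r ?ler_pM2l //; lra.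
have e4 : (a + b) ^+ 2 / 2 <= a ^+ 2 + b ^+ 2 by have := sqr_ge0 (a - b); rewrite !expr2; lra.
lra.
Qed.

Lemma dotp_sub_gt0_near (m : R) X X' Y Y' : 0 < m -> m <= norm1 (X - Y) ->
  norm1 (X' - X) < m / 4 -> norm1 (Y' - Y) < m / 4 -> 0 < dotp (X - Y) (X' - Y').
Proof.
move=> m0 mXY X'X Y'Y; apply: (dotp_gt0_near m0 mXY).
have -> : X' - Y' - (X - Y) = (X' - X) - (Y' - Y).
  by rewrite opprD opprK addrACA opprB [Y - _]addrC.
by apply: le_lt_trans (norm1B _ _) _; lra.
Qed.

Lemma ray_cross_quad_half_plane u z1 z2 z3 z4 :
  0 < dotp u z1 -> 0 < dotp u z2 -> 0 < dotp u z3 -> 0 < dotp u z4 ->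
  ray_cross z1 z2 (+) ray_cross z2 z3 (+) ray_cross z3 z4 (+) ray_cross z4 z1 = false.
Proof.
move=> u1 u2 u3 u4.
rewrite (ray_cross_half_plane u1 u2) (ray_cross_half_plane u2 u3).
rewrite (ray_cross_half_plane u3 u4) (ray_cross_half_plane u4 u1).
by case: (0 <= u.1); case: (upper z1); case: (upper z2); case: (upper z3); case: (upper z4).
Qed.

Lemma ray_cross_grid (F : nat -> nat -> R * R) (N : nat) :
  (forall i j, (i < N)%N -> (j < N)%N -> exists u,
     [/\ 0 < dotp u (F i j), 0 < dotp u (F i.+1 j), 0 < dotp u (F i.+1 j.+1)
       & 0 < dotp u (F i j.+1)]) ->
  \xor_(i < N) ray_cross (F i 0%N) (F i.+1 0%N)
  (+) \xor_(i < N) ray_cross (F i N) (F i.+1 N)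
  (+) \xor_(j < N) ray_cross (F 0%N j) (F 0%N j.+1)
  (+) \xor_(j < N) ray_cross (F N j) (F N j.+1) = false.
Proof.
move=> cells.
pose row j := \xor_(i < N) ray_cross (F i j) (F i.+1 j).
pose col i j := ray_cross (F i j) (F i j.+1).
have row_step j : (j < N)%N -> row j (+) row j.+1 = col 0%N j (+) col N j.
  move=> jN; rewrite /row -big_split -(big_addb_telescope N (col^~ j)).
  apply: eq_bigr => -[i /= iN] _; have [u [u1 u2 u3 u4]] := cells i j iN jN.
  have := ray_cross_quad_half_plane u1 u2 u3 u4.
  rewrite [ray_cross (F i.+1 j.+1) _]ray_crossC [ray_cross (F i j.+1) (F i j)]ray_crossC /col.
  by case: (ray_cross _ _); case: (ray_cross _ _); case: (ray_cross _ _); case: (ray_cross _ _).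
have := big_addb_telescope N row.
rewrite (eq_bigr (fun j : 'I_N => col 0%N j (+) col N j)); last by move=> j _; exact: row_step.
rewrite big_split /= => <-.
rewrite /col; move: (\xor_(i < N) _) (\xor_(i < N) _) => a b.
by case: a; case: b.
Qed.

Lemma ray_cross_path (z : nat -> R * R) (N : nat) :
  (forall i, (i < N)%N -> 0 < dotp (z i) (z i.+1)) ->
  \xor_(i < N) ray_cross (z i) (z i.+1) (+) \xor_(i < N) ray_cross (- z i) (- z i.+1)
  = upper (z 0%N) (+) upper (z N).
Proof.
move=> steps; rewrite -big_split -(big_addb_telescope N (fun i => upper (z i))).
apply: eq_bigr => -[i /= iN] _; rewrite ray_crossN ?steps //.
by case: (upper _); case: (upper _).
Qed.

End RayCrossing.

Section PolygonalK5.
Variable R : realFieldType.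
Variables (P : nat -> R * R) (q : nat -> nat -> nat -> R * R) (N : nat).

Hypothesis P_inj : forall x y, (x < 5)%N -> (y < 5)%N -> x != y -> P x != P y.
Hypothesis q_ends : forall k l, (k < l < 5)%N -> q k l 0%N = P k /\ q k l N = P l.
Hypothesis pair_cells : forall a b c d, (a, b, c, d) \in K5_disjoint_edge_pairs ->
  forall i j, (i < N)%N -> (j < N)%N -> exists u,
    [/\ 0 < dotp u (q a b i - q c d j), 0 < dotp u (q a b i.+1 - q c d j),
        0 < dotp u (q a b i.+1 - q c d j.+1) & 0 < dotp u (q a b i - q c d j.+1)].
Hypothesis pair_steps : forall a b c d, (a, b, c, d) \in K5_disjoint_edge_pairs ->
  forall x, x \in [:: a; b] -> forall i, (i < N)%N ->
  0 < dotp (P x - q c d i) (P x - q c d i.+1).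

(* Parities of the numbers of crossings of the polygonal edge [a b] with the
   horizontal rays from [P x] to the right and to the left. *)
Definition right_crossings a b x :=
  \xor_(i < N) ray_cross (q a b i - P x) (q a b i.+1 - P x).
Definition left_crossings a b x :=
  \xor_(i < N) ray_cross (P x - q a b i) (P x - q a b i.+1).

Definition above x y := upper (P x - P y).

Lemma above_anti x y : (x < 5)%N -> (y < 5)%N -> x != y -> above y x = ~~ above x y.
Proof. by move=> x5 y5 xy; rewrite /above -opprB upperN // subr_eq0 P_inj. Qed.

Lemma left_crossingsE c d x : (c < d < 5)%N ->
  (forall i, (i < N)%N -> 0 < dotp (P x - q c d i) (P x - q c d i.+1)) ->
  left_crossings c d x = right_crossings c d x (+) above x c (+) above x d.
Proof.
move=> cd steps; have [qc qd] := q_ends cd.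
have := ray_cross_path steps.
have -> : \xor_(i < N) ray_cross (- (P x - q c d i)) (- (P x - q c d i.+1))
    = right_crossings c d x by apply: eq_bigr => i _; rewrite !opprB.
by rewrite qc qd => e; rewrite -addbA /above -e addbC addbK.
Qed.

Lemma disjoint_edges_crossings a b c d : (a, b, c, d) \in K5_disjoint_edge_pairs ->
  right_crossings a b c (+) right_crossings a b d
  (+) left_crossings c d a (+) left_crossings c d b = false.
Proof.
move=> abcd; have [ab cd] := K5_pair_edges abcd.
have [qa qb] := q_ends ab; have [qc qd] := q_ends cd.
by have := ray_cross_grid (pair_cells abcd); rewrite qa qb qc qd.
Qed.

Lemma no_K5_polygonal_drawing : False.
Proof.
have pair_parity x : x \in K5_disjoint_edge_pairs ->
    \big[addb/false]_(t <- edge_vertex_terms x) right_crossings t.1.1 t.1.2 t.2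
    (+) \big[addb/false]_(t <- vertex_pair_terms x) above t.1 t.2 = false.
  case: x => [[[a b] c] d] abcd; have [_ cd] := K5_pair_edges abcd.
  have := disjoint_edges_crossings abcd.
  rewrite (left_crossingsE cd (pair_steps abcd (mem_head a [:: b]))).
  rewrite (left_crossingsE cd (pair_steps abcd (mem_last a [:: b]))) !big_cons !big_nil /=.
  by case: (right_crossings a b c); case: (right_crossings a b d);
     case: (right_crossings c d a); case: (right_crossings c d b);
     case: (above a c); case: (above a d); case: (above b c); case: (above b d).
have : \big[addb/false]_(x <- K5_disjoint_edge_pairs)
    (\big[addb/false]_(t <- edge_vertex_terms x) right_crossings t.1.1 t.1.2 t.2
     (+) \big[addb/false]_(t <- vertex_pair_terms x) above t.1 t.2) = false.
  by rewrite big1_seq // => x /andP[_ /pair_parity].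
by rewrite big_split K5_edge_vertex_sum (K5_vertex_pair_sum above_anti).
Qed.

End PolygonalK5.

Section Compactness.
Local Open Scope classical_set_scope.
Variable R : realType.
Implicit Types (s t : R) (z : R * R).

Local Notation I01 := [set t : R | 0 <= t <= 1].

Definition clamp01 s := (`|s| - `|s - 1| + 1) / 2.

Lemma clamp01_in s : 0 <= clamp01 s <= 1.
Proof.
rewrite /clamp01; have [s_ge1|s_lt1] := lerP 1 s.
  by rewrite [`|s|]ger0_norm ?[`|s - 1|]ger0_norm; lra.
have [s_ge0|s_lt0] := lerP 0 s.
  by rewrite [`|s|]ger0_norm ?[`|s - 1|]ltr0_norm; lra.
by rewrite [`|s|]ltr0_norm ?[`|s - 1|]ltr0_norm; lra.
Qed.

Lemma clamp01_id s : 0 <= s <= 1 -> clamp01 s = s.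
Proof. by case/andP=> s0 s1; rewrite /clamp01 [`|s|]ger0_norm ?[`|s - 1|]ler0_norm; lra. Qed.

Lemma clamp01_continuous : continuous clamp01.
Proof.
move=> s; apply: cvgM; last exact: cvg_cst.
apply: cvgD; last exact: cvg_cst.
apply: cvgB; apply: cvg_norm; first exact: cvg_id.
by apply: cvgB; [exact: cvg_id | exact: cvg_cst].
Qed.

Lemma within01_continuous_clamp (T : topologicalType) (g : R -> T) :
  {within I01, continuous g} -> continuous (g \o clamp01).
Proof.
move=> /subspace_continuousP g_cont s.
apply: cvg_comp (g_cont _ (clamp01_in s)) => W /= /clamp01_continuous.
by rewrite nbhs_simpl /=; apply: filterS => t; apply; exact: clamp01_in.
Qed.

Lemma compact_pos_lb (T : topologicalType) (A : set T) (G : T -> R) :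
  compact A -> continuous G -> (forall x, A x -> 0 < G x) ->
  exists2 m, 0 < m & forall x, A x -> m <= G x.
Proof.
move=> A_cpt G_cont G_pos; have [A0|/set0P/negP/negPn/eqP A0] := pselect (A !=set0).
  have [c /[!inE] Ac c_min] := compact_EVT_min A0 A_cpt (continuous_subspaceT G_cont).
  by exists (G c); [exact: G_pos | move=> x Ax; apply: c_min; rewrite inE].
by exists 1 => // x; rewrite A0.
Qed.

Lemma square01_compact : compact (I01 `*` I01).
Proof.
have -> : I01 = `[0, 1]%classic by apply/seteqP; split=> t; rewrite /= in_itv.
exact: compact_setX (@segment_compact R 0 1) (@segment_compact R 0 1).
Qed.

Lemma norm1_continuous : continuous (@norm1 R).
Proof. by move=> z; apply: cvgD; apply: cvg_norm; [exact: cvg_fst | exact: cvg_snd]. Qed.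

Lemma norm1_sub_continuous (e f : R -> R * R) : continuous e -> continuous f ->
  continuous (fun st : R * R => norm1 (e st.1 - f st.2)).
Proof.
move=> e_cont f_cont st.
apply: (continuous_comp (f := fun st : R * R => e st.1 - f st.2)); last first.
  exact: norm1_continuous.
apply: cvgB.
  by apply: (continuous_comp (f := fst) (g := e)); [exact: cvg_fst | exact: e_cont].
by apply: (continuous_comp (f := snd) (g := f)); [exact: cvg_snd | exact: f_cont].
Qed.

Lemma paths_separated (e f : R -> R * R) : continuous e -> continuous f ->
  (forall s t, 0 <= s <= 1 -> 0 <= t <= 1 -> e s != f t) ->
  exists2 m, 0 < m & forall s t, 0 <= s <= 1 -> 0 <= t <= 1 -> m <= norm1 (e s - f t).
Proof.
move=> e_cont f_cont ef.
have ef_pos st : (I01 `*` I01) st -> 0 < norm1 (e st.1 - f st.2).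
  by case=> s01 t01; rewrite norm1_gt0 // subr_eq0 ef.
have [m m0 m_lb] := compact_pos_lb square01_compact (norm1_sub_continuous e_cont f_cont) ef_pos.
by exists m => // s t s01 t01; exact: (m_lb (s, t)).
Qed.

(* The minimum of [|s - t| + max (eps - |g s - g t|_1) 0] on the square is a
   modulus of uniform continuity. *)
Lemma path_uniform_continuous (g : R -> R * R) (eps : R) : continuous g -> 0 < eps ->
  exists2 d, 0 < d & forall s t, 0 <= s <= 1 -> 0 <= t <= 1 ->
    `|s - t| < d -> norm1 (g s - g t) < eps.
Proof.
move=> g_cont eps0.
pose G (st : R * R) := `|st.1 - st.2| + Num.max (eps - norm1 (g st.1 - g st.2)) 0.
have G_cont : continuous G.
  move=> st; apply: cvgD.
    by apply: cvg_norm; apply: cvgB; [exact: cvg_fst | exact: cvg_snd].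
  apply: (@continuous_max _ _ (fun st => eps - norm1 (g st.1 - g st.2)) (cst 0)).
    by apply: cvgB; [exact: cvg_cst | exact: norm1_sub_continuous].
  exact: cvg_cst.
have G_pos st : 0 < G st.
  have [st_eq|st_neq] := eqVneq st.1 st.2.
    by rewrite /G st_eq !subrr normr0 /norm1 /= normr0 !addr0 subr0 add0r max_l ?ltW.
  by apply: ltr_pwDl; rewrite ?normr_gt0 ?subr_eq0 // le_max lexx orbT.
have [d d0 d_lb] := compact_pos_lb square01_compact G_cont (fun st _ => G_pos st).
exists d => // s t s01 t01 st_d; rewrite ltNge; apply/negP => eps_le.
have := d_lb (s, t) (conj s01 t01); rewrite /G /=.
rewrite max_r ?subr_le0 // addr0; lra.
Qed.

End Compactness.

Section CurveK5.
Local Open Scope classical_set_scope.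
Variable R : realType.
Variables (P : nat -> R * R) (g : nat -> nat -> R -> R * R).

Hypothesis P_inj : forall x y, (x < 5)%N -> (y < 5)%N -> x != y -> P x != P y.
Hypothesis g_cont :
  forall k l, (k < l < 5)%N -> {within [set t : R | 0 <= t <= 1], continuous (g k l)}.
Hypothesis g_ends : forall k l, (k < l < 5)%N -> g k l 0 = P k /\ g k l 1 = P l.
Hypothesis pair_apart : forall a b c d, (a, b, c, d) \in K5_disjoint_edge_pairs ->
  forall s t, 0 <= s <= 1 -> 0 <= t <= 1 -> g a b s != g c d t.
Hypothesis vertex_off_edge : forall a b c d, (a, b, c, d) \in K5_disjoint_edge_pairs ->
  forall x, x \in [:: a; b] -> forall t, 0 <= t <= 1 -> P x != g c d t.

Let g_ext_continuous k l : (k < l < 5)%N -> continuous (g k l \o clamp01 (R := R)).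
Proof. by move=> kl; apply: within01_continuous_clamp; exact: g_cont. Qed.

Let g_extE k l s : 0 <= s <= 1 -> (g k l \o clamp01 (R := R)) s = g k l s.
Proof. by move=> s01; rewrite /= clamp01_id. Qed.

Lemma K5_curves_separated : exists2 m, 0 < m &
  forall a b c d, (a, b, c, d) \in K5_disjoint_edge_pairs ->
  (forall s t, 0 <= s <= 1 -> 0 <= t <= 1 -> m <= norm1 (g a b s - g c d t)) /\
  (forall x, x \in [:: a; b] -> forall t, 0 <= t <= 1 -> m <= norm1 (P x - g c d t)).
Proof.
pose Q (x : nat * nat * nat * nat) (m : R) := let: (a, b, c, d) := x in
  (forall s t, 0 <= s <= 1 -> 0 <= t <= 1 -> m <= norm1 (g a b s - g c d t)) /\
  (forall x, x \in [:: a; b] -> forall t, 0 <= t <= 1 -> m <= norm1 (P x - g c d t)).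
suff [m m0 Qm] : exists2 m, 0 < m & forall x, x \in K5_disjoint_edge_pairs -> Q x m.
  by exists m => // a b c d /Qm.
apply: common_pos_bound => [[[[a b] c] d] m m' /andP[_ m'm] [curves vertices]|].
  by split=> [s t s01 t01|x xab t t01]; apply: le_trans m'm _; auto.
move=> [[[a b] c] d] abcd; have [ab cd] := K5_pair_edges abcd.
have curves_apart (s t : R) : 0 <= s <= 1 -> 0 <= t <= 1 ->
    (g a b \o clamp01 (R := R)) s != (g c d \o clamp01 (R := R)) t.
  by move=> s01 t01; rewrite !g_extE // pair_apart.
have [m1 m10 m1_lb] :=
  paths_separated (g_ext_continuous ab) (g_ext_continuous cd) curves_apart.
have [m2 m20 m2_lb] : exists2 m, 0 < m & forall x, x \in [:: a; b] ->
    forall t, 0 <= t <= 1 -> m <= norm1 (P x - g c d t).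
  apply: common_pos_bound => [x m m' /andP[_ m'm] sep t t01|x xab].
    exact: le_trans m'm (sep t t01).
  have Px_cont : continuous (fun _ : R => P x) by move=> ?; exact: cvg_cst.
  have Px_apart (s t : R) : 0 <= s <= 1 -> 0 <= t <= 1 -> P x != (g c d \o clamp01 (R := R)) t.
    by move=> _ t01; rewrite g_extE // (vertex_off_edge abcd xab).
  have [m m0 m_lb] := paths_separated Px_cont (g_ext_continuous cd) Px_apart.
  exists m => // t t01.
  by have := m_lb 0 t; rewrite /= clamp01_id //; apply; rewrite // lexx ler01.
exists (Num.min m1 m2); first by rewrite lt_min m10 m20.
split=> [s t s01 t01|x xab t t01]; rewrite ge_min.
  by rewrite -!g_extE // m1_lb.
by rewrite m2_lb ?orbT.
Qed.

Lemma K5_curves_uniformly_continuous (eps : R) : 0 < eps -> exists2 delta, 0 < delta &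
  forall k l, (k < l < 5)%N -> forall s t, 0 <= s <= 1 -> 0 <= t <= 1 ->
  `|s - t| < delta -> norm1 (g k l s - g k l t) < eps.
Proof.
move=> eps0.
pose Q (e : nat * nat) (delta : R) := (e.1 < e.2 < 5)%N -> forall s t,
  0 <= s <= 1 -> 0 <= t <= 1 -> `|s - t| < delta -> norm1 (g e.1 e.2 s - g e.1 e.2 t) < eps.
suff [d d0 Qd] : exists2 d, 0 < d &
    forall e, e \in [seq (k, l) | k <- iota 0 5, l <- iota 0 5] -> Q e d.
  exists d => // k l kl; apply: (Qd (k, l)) => //.
  by case/andP: kl => kl l5; apply: allpairs_f; rewrite mem_iota ?(ltn_trans kl l5).
apply: common_pos_bound => [e d d' /andP[_ d'd] osc kl s t s01 t01 st|[k l] _].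
  exact: osc kl s t s01 t01 (lt_le_trans st d'd).
case: (boolP (k < l < 5)%N) => kl; last by exists 1 => //= kl'; rewrite kl' in kl.
have [d d0 osc] := path_uniform_continuous (g_ext_continuous kl) eps0.
by exists d => // _ s t s01 t01 st; rewrite -!g_extE //; apply: osc.
Qed.

Lemma no_K5_curve_drawing : False.
Proof.
have [m m0 sep] := K5_curves_separated.
have m4 : 0 < m / 4 by rewrite divr_gt0.
have [delta delta0 osc] := K5_curves_uniformly_continuous m4.
pose N := Num.Def.archi_bound delta^-1.
have N_gt : delta^-1 < N%:R by apply: archi_boundP; rewrite invr_ge0 ltW.
have N0 : (0 < N)%N by rewrite -(ltr_nat R) (lt_trans _ N_gt) // invr_gt0.
pose s i := (i%:R / N%:R : R).
have s0 : s 0%N = 0 by rewrite /s mul0r.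
have sN : s N = 1 by rewrite /s divff // pnatr_eq0 -lt0n.
have s01 i : (i <= N)%N -> 0 <= s i <= 1.
  by move=> iN; rewrite divr_ge0 ?ler0n //= ler_pdivrMr ?ltr0n // mul1r ler_nat.
have s_step i : `|s i.+1 - s i| < delta.
  rewrite /s -mulrBl -natrB // subSnn mul1r ger0_norm ?invr_ge0 ?ler0n //.
  by rewrite invf_plt ?posrE // ltr0n.
have close k l i i' : (k < l < 5)%N -> (i < N)%N -> i' \in [:: i; i.+1] ->
    norm1 (g k l (s i') - g k l (s i)) < m / 4.
  move=> kl iN; rewrite !inE => /orP[/eqP->|/eqP->]; first by rewrite subrr norm10.
  by apply: osc; rewrite ?s01 // ltnW.
apply: (@no_K5_polygonal_drawing R P (fun k l i => g k l (s i)) N P_inj).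
- by move=> k l kl; have [g0 g1] := g_ends kl; rewrite s0 sN g0 g1.
- move=> a b c d abcd i j iN jN; have [ab cd] := K5_pair_edges abcd.
  have [curves _] := sep a b c d abcd.
  have base := curves _ _ (s01 i (ltnW iN)) (s01 j (ltnW jN)).
  exists (g a b (s i) - g c d (s j)).
  by split; apply: dotp_sub_gt0_near m0 base _ _; apply: close; rewrite ?inE ?eqxx ?orbT.
- move=> a b c d abcd x xab i iN; have [_ cd] := K5_pair_edges abcd.
  have [_ vertices] := sep a b c d abcd.
  apply: dotp_sub_gt0_near m0 (vertices x xab _ (s01 i (ltnW iN))) _ _.
    by rewrite subrr norm10.
  exact: close cd iN (mem_last i [:: i.+1]).
Qed.

End CurveK5.

Lemma itv01_cases (R : realDomainType) (t : R) : 0 <= t <= 1 -> [\/ t = 0, t = 1 | 0 < t < 1].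
Proof.
case/andP=> t0 t1.
have [t_gt0|t_le0] := ltP 0 t; last by constructor 1; apply/eqP; rewrite eq_le t_le0.
have [t_lt1|t_ge1] := ltP t 1; last by constructor 2; apply/eqP; rewrite eq_le t1.
by constructor 3.
Qed.

Section PlanarK5.
Local Open Scope classical_set_scope.
Variables (T : Type) (V : T -> Prop) (E : T -> T -> Prop) (v : nat -> T).
Hypothesis v_vertex : forall k, (k < 5)%N -> V (v k).
Hypothesis v_adj : forall k l, (k < 5)%N -> (l < 5)%N -> k != l -> E (v k) (v l).
Hypothesis v_inj : forall k l, (k < 5)%N -> (l < 5)%N -> k != l -> v k <> v l.

Variables (p : T -> plane) (g : T -> T -> Rdefinitions.R -> plane).
Hypothesis p_inj : forall u w, V u -> V w -> p u = p w -> u = w.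
Hypothesis g_edge : forall u w, V u -> V w -> E u w ->
  [/\ {within [set t : Rdefinitions.R | 0 <= t <= 1], continuous (g u w)},
      g u w 0 = p u, g u w 1 = p w,
      (forall s t, 0 <= s <= 1 -> 0 <= t <= 1 -> g u w s = g u w t -> s = t)
    & (forall t x, 0 < t < 1 -> V x -> g u w t <> p x)].
Hypothesis g_cross : forall u w u' w', V u -> V w -> E u w -> V u' -> V w' -> E u' w' ->
  ~ ((u' = u /\ w' = w) \/ (u' = w /\ w' = u)) ->
  forall s t, 0 <= s <= 1 -> 0 <= t <= 1 -> g u w s = g u' w' t ->
  exists x, V x /\ g u w s = p x.

Lemma K5_point_inj x y : (x < 5)%N -> (y < 5)%N -> p (v x) = p (v y) -> x = y.
Proof.
move=> x5 y5 /(p_inj (v_vertex x5) (v_vertex y5)) vxy.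
by case: (eqVneq x y) => // xy; case: (v_inj x5 y5 xy vxy).
Qed.

Lemma K5_vertex_on_edge c d x t : (c < 5)%N -> (d < 5)%N -> (x < 5)%N -> c != d ->
  0 <= t <= 1 -> p (v x) = g (v c) (v d) t -> x = c \/ x = d.
Proof.
move=> c5 d5 x5 cd t01 xt.
have [_ g0 g1 _ g_int] := g_edge (v_vertex c5) (v_vertex d5) (v_adj c5 d5 cd).
case: (itv01_cases t01) xt => [->|->|t_int] xt.
- by left; apply: K5_point_inj; rewrite ?xt.
- by right; apply: K5_point_inj; rewrite ?xt.
- by case: (g_int t (v x) t_int (v_vertex x5)).
Qed.

Lemma K5_disjoint_edges_apart a b c d s t : (a, b, c, d) \in K5_disjoint_edge_pairs ->
  0 <= s <= 1 -> 0 <= t <= 1 -> g (v a) (v b) s <> g (v c) (v d) t.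
Proof.
move=> abcd s01 t01 st.
have /and3P[/andP[ab b5] /andP[cd d5] /and4P[ac ad bc bd]] :=
  allP K5_disjoint_edge_pairsP _ abcd.
have a5 := ltn_trans ab b5; have c5 := ltn_trans cd d5.
have a_b : a != b by rewrite ltn_eqF.
have c_d : c != d by rewrite ltn_eqF.
have [_ g0 g1 _ g_int] := g_edge (v_vertex a5) (v_vertex b5) (v_adj a5 b5 a_b).
have other_edge : ~ ((v c = v a /\ v d = v b) \/ (v c = v b /\ v d = v a)).
  by case=> -[/v_inj vca _]; apply: vca; rewrite // eq_sym.
have [w [Vw sw]] := g_cross (v_vertex a5) (v_vertex b5) (v_adj a5 b5 a_b)
  (v_vertex c5) (v_vertex d5) (v_adj c5 d5 c_d) other_edge s01 t01 st.
case: (itv01_cases s01) st => [->|->|s_int] st.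
- by case: (K5_vertex_on_edge c5 d5 a5 c_d t01); rewrite -?g0 // => /eqP;
    rewrite ?(negPf ac) ?(negPf ad).
- by case: (K5_vertex_on_edge c5 d5 b5 c_d t01); rewrite -?g1 // => /eqP;
    rewrite ?(negPf bc) ?(negPf bd).
- exact: g_int s w s_int Vw sw.
Qed.

Lemma K5_vertex_off_edge a b c d x t : (a, b, c, d) \in K5_disjoint_edge_pairs ->
  x \in [:: a; b] -> 0 <= t <= 1 -> p (v x) <> g (v c) (v d) t.
Proof.
move=> abcd xab t01 xt.
have /and3P[/andP[ab b5] /andP[cd d5] /and4P[ac ad bc bd]] :=
  allP K5_disjoint_edge_pairsP _ abcd.
have x5 : (x < 5)%N by move: xab; rewrite !inE => /orP[]/eqP->; rewrite ?(ltn_trans ab b5).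
have c_d : c != d by rewrite ltn_eqF.
case: (K5_vertex_on_edge (ltn_trans cd d5) d5 x5 c_d t01 xt) => x_cd; move: xab.
  by rewrite x_cd !inE eq_sym (negPf ac) eq_sym (negPf bc).
by rewrite x_cd !inE eq_sym (negPf ad) eq_sym (negPf bd).
Qed.

End PlanarK5.

Lemma K5_not_planar (T : Type) (V : T -> Prop) (E : T -> T -> Prop) (v : nat -> T) :
  (forall k, (k < 5)%N -> V (v k)) ->
  (forall k l, (k < 5)%N -> (l < 5)%N -> k != l -> E (v k) (v l)) ->
  (forall k l, (k < 5)%N -> (l < 5)%N -> k != l -> v k <> v l) ->
  ~ planar V E.
Proof.
move=> v_vertex v_adj v_inj [p [g [p_inj [g_edge g_cross]]]].
have edge k l : (k < l < 5)%N -> [/\ V (v k), V (v l) & E (v k) (v l)].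
  case/andP=> kl l5; have k5 := ltn_trans kl l5.
  by split; [exact: v_vertex | exact: v_vertex | apply: v_adj; rewrite ?ltn_eqF].
apply: (@no_K5_curve_drawing Rdefinitions.R (fun k => p (v k)) (fun k l => g (v k) (v l))).
- move=> x y x5 y5; apply: contra_neq; exact: (K5_point_inj v_vertex v_inj p_inj).
- by move=> k l /edge[Vk Vl Ekl]; case: (g_edge _ _ Vk Vl Ekl).
- by move=> k l /edge[Vk Vl Ekl]; case: (g_edge _ _ Vk Vl Ekl).
- move=> a b c d abcd s t s01 t01; apply/eqP.
  exact: (K5_disjoint_edges_apart v_vertex v_adj v_inj p_inj g_edge g_cross).
- move=> a b c d abcd x xab t t01; apply/eqP.
  exact: (K5_vertex_off_edge v_vertex v_adj v_inj p_inj g_edge abcd xab t01).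
Qed.

Section K5InGamma.
Variables (n : nat) (R : 'I_n -> comNzRingType) (I : forall i, {pred R i}).
Hypothesis n4 : (4 <= n)%N.
Hypothesis I_proper : forall i : 'I_n, (1 : R i) \notin @I i.

Definition K5_support (k : nat) : seq nat :=
  nth [::] [:: [:: 0; 1]; [:: 0; 2]; [:: 0; 3]; [:: 1; 2]; [:: 1; 3]]%N k.

Lemma K5_support_incomparable k l : (k < 5)%N -> (l < 5)%N -> k != l ->
  exists2 i, (i < 4)%N & (i \in K5_support k) && (i \notin K5_support l).
Proof.
move=> k5 l5 kl.
have /hasP[i] : has (fun i => (i \in K5_support k) && (i \notin K5_support l)) (iota 0 4).
  by move: k l k5 l5 kl => [|[|[|[|[|k]]]]] [|[|[|[|[|l]]]]].
by rewrite mem_iota => /andP[_ i4] ikl; exists i.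
Qed.

Definition K5_vertex k : prodR R := [ffun i => if val i \in K5_support k then 1 else 0].

Lemma K5_vertexE k (i : 'I_n) : K5_vertex k i = if val i \in K5_support k then 1 else 0.
Proof. by rewrite ffunE. Qed.

Lemma not_in_xR_I_coord (x y : prodR R) (i : 'I_n) :
  x i \notin @I i -> y i = 0 -> ~ in_xR_I (prod_ideal I) y x.
Proof.
move=> xi yi [r [a [/forallP aI xE]]]; move: xi.
by rewrite xE prodR_addE prodR_mulE yi mul0r add0r aI.
Qed.

Let coord (i : nat) (i4 : (i < 4)%N) : 'I_n := Ordinal (leq_trans i4 n4).

Lemma K5_vertex_vertex k : (k < 5)%N -> G2_vertex (prod_ideal I) (K5_vertex k).
Proof.
move=> k5; have [l l5 kl] : exists2 l, (l < 5)%N & k != l by exists (k == 0%N); case: k k5.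
have lk : l != k by rewrite eq_sym.
have [i i4 /andP[ik _]] := K5_support_incomparable k5 l5 kl.
have [j j4 /andP[_ jk]] := K5_support_incomparable l5 k5 lk.
split.
  apply/forallP => /(_ (coord i4)); rewrite K5_vertexE /= ik.
  exact/negP/I_proper.
move=> /(_ 1); apply: (not_in_xR_I_coord (i := coord j4)).
  by rewrite /GRing.one /= ffunE I_proper.
by rewrite K5_vertexE /= (negPf jk).
Qed.

Lemma K5_vertex_adj k l : (k < 5)%N -> (l < 5)%N -> k != l ->
  G2_adj (prod_ideal I) (K5_vertex k) (K5_vertex l).
Proof.
move=> k5 l5 kl; have lk : l != k by rewrite eq_sym.
have [i i4 /andP[ik il]] := K5_support_incomparable k5 l5 kl.
have [j j4 /andP[jl jk]] := K5_support_incomparable l5 k5 lk.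
have [ki li] : K5_vertex k (coord i4) = 1 /\ K5_vertex l (coord i4) = 0.
  by rewrite !K5_vertexE /= ik (negPf il).
have [lj kj] : K5_vertex l (coord j4) = 1 /\ K5_vertex k (coord j4) = 0.
  by rewrite !K5_vertexE /= jl (negPf jk).
split; [|split].
- by move=> /(congr1 (fun x : prodR R => x (coord i4))); rewrite ki li => /eqP; rewrite oner_eq0.
- by apply: (not_in_xR_I_coord (i := coord i4)); rewrite ?ki ?I_proper.
- by apply: (not_in_xR_I_coord (i := coord j4)); rewrite ?lj ?I_proper.
Qed.

End K5InGamma.

Theorem proposition3p5 (n : nat) (R : 'I_n -> finComNzRingType)
  (I : forall i : 'I_n, {pred R i}) :
  (4 <= n)%N ->
  (forall i, local_ring (R i)) ->
  (forall i, idealr_closed (I i)) ->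
  ~ planar (G2_vertex (prod_ideal I)) (G2_adj (prod_ideal I)).
Proof.
move=> n4 _ I_ideal.
have I_proper i : (1 : R i) \notin I i by case: (I_ideal i).
apply: (K5_not_planar (v := K5_vertex (fun i => R i))) => [k k5|k l k5 l5 kl|k l k5 l5 kl].
- exact: K5_vertex_vertex.
- exact: K5_vertex_adj.
- by case: (K5_vertex_adj n4 I_proper k5 l5 kl).
Qed.
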